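(* Let $(\Omega,\mathcal F,P)$ be a probability space and let $\mathcal F_1,\mathcal F_2\subset\mathcal F$ be sub-$\sigma$-fields. - (a) If $C_1\subset C_2$ are measurable and $\mathcal F_1,\mathcal F_2$ are a nonsingular pair within $C_2$, then they are a nonsingular pair within $C_1$. - (b) If $C_1,C_2,\dots$ are pairwise disjoint measurable sets with union $C$, and $\mathcal F_1,\mathcal F_2$ are a nonsingular pair within each $C_k$, then they are a nonsingular pair within $C$. - (c) Let $C$ be measurable and let $\mathcal E_1\subset\mathcal F$ be a sub-$\sigma$-field such that for every $E\in\mathcal E_1$ there exists $A\in\mathcal F_1$ with $A\cap C=E\cap C$. If $\mathcal F_1,\mathcal F_2$ are a nonsingular pair within $C$, then $\mathcal E_1,\mathcal F_2$ are a nonsingular pair within $C$.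
   Context: Let $(\Omega,\mathcal F,P)$ be a probability space and $C\in\mathcal F$. Two sub-$\sigma$-fields $\mathcal F_1,\mathcal F_2\subset\mathcal F$ are a nonsingular pair within $C$ if there exists a measurable function $f:\Omega\times\Omega\to[0,\infty)$ such that $P(A\cap B\cap C)=\int_{A\times B} f(\omega_1,\omega_2)\,P(d\omega_1)P(d\omega_2)$ for all $A\in\mathcal F_1$, $B\in\mathcal F_2$. Equivalently, there exists a measurable $g:C\times C\to[0,\infty)$ with $P(A\cap B\cap C)=\int_{(A\cap C)\times(B\cap C)} g\,dP\,dP$ for all such $A,B$. *)

From HB Require Import structures.
From mathcomp Require Import all_boot all_order all_algebra.
From mathcomp Require Import all_classical all_reals all_analysis.
Set Implicit Arguments. Unset Strict Implicit. Unset Printing Implicit Defensive.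
Import Order.TTheory GRing.Theory Num.Theory.
Local Open Scope classical_set_scope.
Local Open Scope ring_scope.

Definition sub_sigma_field d (T : measurableType d) (G : set (set T)) : Prop :=
  sigma_algebra setT G /\ G `<=` measurable.

Definition nonsingular_pair d (T : measurableType d) (R : realType)
  (P : probability T R) (F1 F2 : set (set T)) (C : set T) : Prop :=
  exists f : T * T -> R,
    measurable_fun setT f /\ (forall z, 0 <= f z) /\
    forall A B, F1 A -> F2 B ->
      P (A `&` B `&` C) = (\int[(P \x P)%E]_(z in A `*` B) (f z)%:E)%E.

From HB Require Import structures.
From mathcomp Require Import all_boot all_order all_algebra.
From mathcomp Require Import all_classical all_reals all_analysis.
From mathcomp Require Import measurable_realfun.
Set Implicit Arguments. Unset Strict Implicit. Unset Printing Implicit Defensive.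
Import Order.TTheory GRing.Theory Num.Theory.
Local Open Scope classical_set_scope.
Local Open Scope ring_scope.
Local Open Scope ereal_scope.

(* Nonsingularity within C is absolute continuity: F1, F2 are a nonsingular
   pair within C iff the measure S |-> P {w in C | (w, w) in S} on F1 (x) F2 is
   absolutely continuous with respect to P (x) P on F1 (x) F2.  One direction
   is the Radon-Nikodym theorem on the product sigma-field F1 (x) F2, the other
   extends the defining identity from rectangles to F1 (x) F2 by uniqueness of
   measures.  Parts (a) and (b) then follow from monotonicity and countable
   additivity of this diagonal measure in C.
   For (c), every set of E1 (x) F2 agrees on C x C with a set S of F1 (x) F2,
   so it suffices that (P (x) P)(S n C x C) = 0 forces the diagonal measure of
   S to vanish.  Let p_i be the density of P(. n C) with respect to P on F_i.
   Then p1 (x) p2 is the density of (P (x) P)(. n C x C) on F1 (x) F2, so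
   S n {p1 > 0} x {p2 > 0} is (P (x) P)-null, and its diagonal measure vanishes
   by nonsingularity; the rest of the diagonal over C lies over
   {p1 = 0} u {p2 = 0}, which meets C in a P-null set. *)

(* Unlike [pushforward], [mpushforward] records the measurability of [f], so
   that the measure structures below can be inferred. *)
Definition mpushforward d1 d2 (X : measurableType d1) (Y : measurableType d2)
    (R : realType) (m : set X -> \bar R) (f : X -> Y)
    & measurable_fun setT f :=
  pushforward m f.

Section mpushforward.
Context d1 d2 (X : measurableType d1) (Y : measurableType d2) (R : realType).
Variables (f : X -> Y) (mf : measurable_fun setT f).

Section measure.
Variable m : {measure set X -> \bar R}.

Let mpushforward0 : mpushforward m mf set0 = 0.
Proof. by rewrite /mpushforward /pushforward preimage_set0 measure0. Qed.

Let mpushforward_ge0 A : 0 <= mpushforward m mf A.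
Proof. exact: measure_ge0. Qed.

Let mpushforward_sigma_additive : semi_sigma_additive (mpushforward m mf).
Proof.
move=> F mF tF mUF; rewrite /mpushforward /pushforward preimage_bigcup.
apply: measure_semi_sigma_additive.
- by move=> n; rewrite -[X in measurable X]setTI; exact: mf.
- apply/trivIsetP => /= i j _ _ ij; rewrite -preimage_setI.
  by move/trivIsetP : tF => /(_ _ _ _ _ ij) ->//; rewrite preimage_set0.
- by rewrite -preimage_bigcup -[X in measurable X]setTI; exact: mf.
Qed.

HB.instance Definition _ := isMeasure.Build _ _ _ (mpushforward m mf)
  mpushforward0 mpushforward_ge0 mpushforward_sigma_additive.

End measure.

Section finite_measure.
Variable m : {finite_measure set X -> \bar R}.

Let mpushforward_fin : fin_num_fun (mpushforward m mf).
Proof.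
by move=> A mA; apply: fin_num_measure; rewrite -[X in measurable X]setTI; exact: mf.
Qed.

HB.instance Definition _ := Measure_isFinite.Build _ _ _ (mpushforward m mf)
  mpushforward_fin.

End finite_measure.

Lemma radon_nikodym_mpushforward (mu nu : {finite_measure set X -> \bar R}) :
  mpushforward nu mf `<< mpushforward mu mf ->
  exists h : Y -> \bar R, [/\ measurable_fun [set: Y] h, forall y, 0 <= h y,
    forall y, h y \is a fin_num &
    forall A, measurable A -> nu (f @^-1` A) = \int[mu]_(x in f @^-1` A) h (f x)].
Proof.
move=> numu; have [h [h0 hfin hint hE]] := radon_nikodym_sigma_finite numu.
have mh : measurable_fun setT h := measurable_int _ hint.
exists h; split => // A mA; rewrite [LHS]hE //.
by rewrite ge0_integral_pushforward //; exact: measurable_funTS.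
Qed.

End mpushforward.

Section sub_sigma_field.
Context d (T : measurableType d) (G : set (set T)).
Hypothesis sG : sub_sigma_field G.

Lemma sub_sigma_field_measurableE : @measurable _ (g_sigma_algebraType G) = G.
Proof. exact: sigma_algebra_id sG.1. Qed.

Lemma sub_sigma_fieldT : G setT.
Proof. by case: sG => -[G0 GC _] _; rewrite -(setD0 setT); exact: GC. Qed.

Lemma sub_sigma_fieldC A : G A -> G (~` A).
Proof. by case: sG => -[_ GC _] _ GA; rewrite -setTD; exact: GC. Qed.

Lemma sub_sigma_fieldI A B : G A -> G B -> G (A `&` B).
Proof.
rewrite -sub_sigma_field_measurableE => mA mB.
exact: (@measurableI _ (g_sigma_algebraType G)).
Qed.

Lemma measurable_id_sub_sigma_field :
  measurable_fun [set: T] (id : T -> g_sigma_algebraType G).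
Proof. by move=> _ A; rewrite sub_sigma_field_measurableE setTI; exact: sG.2. Qed.

Lemma sub_sigma_field_radon_nikodym (R : realType)
    (mu nu : {finite_measure set T -> \bar R}) :
  (forall A, G A -> mu A = 0 -> nu A = 0) ->
  exists p : T -> \bar R, [/\ measurable_fun [set: g_sigma_algebraType G] p,
    forall x, 0 <= p x & forall A, G A -> nu A = \int[mu]_(x in A) p x].
Proof.
move=> numu.
have [|p [mp p0 _ pE]] := radon_nikodym_mpushforward
  (mf := measurable_id_sub_sigma_field) (mu := mu) (nu := nu).
  apply/null_content_dominatesP => A; rewrite sub_sigma_field_measurableE.
  exact: numu.
by exists p; split => // A GA; apply: pE; rewrite sub_sigma_field_measurableE.
Qed.

End sub_sigma_field.

Definition prod_sigma_field T (G1 G2 : set (set T)) :=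
  (g_sigma_algebraType G1 * g_sigma_algebraType G2)%type.

Section prod_sigma_field.
Context d (T : measurableType d) (G1 G2 : set (set T)).
Hypotheses (sG1 : sub_sigma_field G1) (sG2 : sub_sigma_field G2).
Local Notation TT := (prod_sigma_field G1 G2).

Definition rectangles := [set A `*` B | A in G1 & B in G2].

Lemma prod_sigma_field_measurableE : @measurable _ TT = <<s rectangles >>.
Proof. by rewrite measurable_prod_measurableType !sub_sigma_field_measurableE. Qed.

Lemma rectangles_setI_closed : setI_closed rectangles.
Proof.
move=> _ _ [A GA [B GB <-]] [A' GA' [B' GB' <-]]; rewrite -setXI.
exists (A `&` A'); first exact: sub_sigma_fieldI.
by exists (B `&` B'); first exact: sub_sigma_fieldI.
Qed.

Lemma measurable_rectangle A B : G1 A -> G2 B -> measurable (A `*` B : set TT).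
Proof.
move=> GA GB; rewrite prod_sigma_field_measurableE.
by apply: sub_sigma_algebra; exists A => //; exists B.
Qed.

Lemma prod_sigma_field_measurable (S : set (T * T)) :
  measurable (S : set TT) -> measurable S.
Proof.
rewrite prod_sigma_field_measurableE.
apply: smallest_sub; first exact: sigma_algebra_measurable.
by move=> _ [A GA [B GB <-]]; apply: measurableX; [exact: sG1.2|exact: sG2.2].
Qed.

Lemma measurable_id_prod_sigma_field :
  measurable_fun [set: T * T] (id : T * T -> TT).
Proof. by move=> _ S mS; rewrite setTI; exact: prod_sigma_field_measurable. Qed.

Variable R : realType.

Lemma prod_sigma_field_measure_unique
    (m1 : {finite_measure set (T * T)%type -> \bar R})
    (m2 : {measure set (T * T)%type -> \bar R}) :
  (forall A B, G1 A -> G2 B -> m1 (A `*` B) = m2 (A `*` B)) ->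
  forall S : set TT, measurable S -> m1 S = m2 S.
Proof.
move=> m12; apply: (measure_unique (T := TT) rectangles (fun=> setT)
  prod_sigma_field_measurableE rectangles_setI_closed _ _
  (mpushforward m1 measurable_id_prod_sigma_field)
  (mpushforward m2 measurable_id_prod_sigma_field)).
- move=> _; rewrite -setXTT; exists setT; first exact: sub_sigma_fieldT.
  by exists setT; first exact: sub_sigma_fieldT.
- by rewrite bigcup_const.
- by move=> _ [A GA [B GB <-]]; exact: m12.
- by move=> _; rewrite ltey_eq fin_num_measure.
Qed.

Lemma prod_sigma_field_density_unique
    (m : {finite_measure set (T * T)%type -> \bar R})
    (mu : {measure set (T * T)%type -> \bar R}) (f : T * T -> \bar R) :
  measurable_fun setT f -> (forall z, 0 <= f z) ->
  (forall A B, G1 A -> G2 B -> m (A `*` B) = \int[mu]_(z in A `*` B) f z) ->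
  forall S : set TT, measurable S -> m S = \int[mu]_(z in S) f z.
Proof.
move=> mf f_ge0 mE.
have intf : mu.-integrable setT f.
  apply/integrableP; split => //; under eq_integral do rewrite gee0_abs //.
  rewrite -setXTT -mE; [|exact: sub_sigma_fieldT..].
  by rewrite setXTT ltey_eq fin_num_measure.
have induced_ge0 E : 0 <= induced_charge intf E by exact: integral_ge0.
exact: (prod_sigma_field_measure_unique (m2 := measure_of_charge _ induced_ge0)).
Qed.

End prod_sigma_field.

Section integral_setX_mul.
Context d1 d2 (T1 : measurableType d1) (T2 : measurableType d2) (R : realType).
Variables (m1 : {sigma_finite_measure set T1 -> \bar R})
  (m2 : {sigma_finite_measure set T2 -> \bar R}).

Lemma integral_mul_prod (f1 : T1 -> \bar R) (f2 : T2 -> \bar R) :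
  measurable_fun setT f1 -> measurable_fun setT f2 ->
  (forall x, 0 <= f1 x) -> (forall y, 0 <= f2 y) ->
  \int[m1 \x m2]_z (f1 z.1 * f2 z.2) = \int[m1]_x f1 x * \int[m2]_y f2 y.
Proof.
move=> mf1 mf2 f1_ge0 f2_ge0.
have mf : measurable_fun setT (fun z : T1 * T2 => f1 z.1 * f2 z.2).
  exact: emeasurable_funM (measurableT_comp mf1 measurable_fst)
    (measurableT_comp mf2 measurable_snd).
rewrite fubini_tonelli1 //; last by move=> z; exact: mule_ge0.
rewrite /fubini_F -ge0_integralZr //; last exact: integral_ge0.
by apply: eq_integral => x _ /=; rewrite ge0_integralZl.
Qed.

Lemma integral_setX_mul (f1 : T1 -> \bar R) (f2 : T2 -> \bar R) A B :
  measurable_fun setT f1 -> measurable_fun setT f2 ->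
  (forall x, 0 <= f1 x) -> (forall y, 0 <= f2 y) ->
  measurable A -> measurable B ->
  \int[m1 \x m2]_(z in A `*` B) (f1 z.1 * f2 z.2) =
  \int[m1]_(x in A) f1 x * \int[m2]_(y in B) f2 y.
Proof.
move=> mf1 mf2 f1_ge0 f2_ge0 mA mB; rewrite integral_mkcond.
transitivity (\int[m1 \x m2]_z ((f1 \_ A) z.1 * (f2 \_ B) z.2)).
  apply: eq_integral => z _; rewrite /patch in_setX.
  by case: (z.1 \in A); case: (z.2 \in B); rewrite ?mul0e ?mule0.
rewrite integral_mul_prod -?integral_mkcond //.
- by apply/(measurable_restrictT _ _).1 => //; exact: measurable_funTS.
- by apply/(measurable_restrictT _ _).1 => //; exact: measurable_funTS.
- by move=> x; rewrite /patch; case: ifP.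
- by move=> y; rewrite /patch; case: ifP.
Qed.

End integral_setX_mul.

Lemma integral0_gt0_measure0 d (T : measurableType d) (R : realType)
    (mu : {measure set T -> \bar R}) (D : set T) (f : T -> \bar R) :
  measurable D -> measurable_fun D f -> (forall x, D x -> 0 < f x) ->
  \int[mu]_(x in D) f x = 0 -> mu D = 0.
Proof.
move=> mD mf f_gt0 intf0.
have [|N [mN muN0 fN]] := (ae_eq_integral_abs mu mD mf).1.
  by rewrite -intf0; apply: eq_integral => x /[!inE] Dx; rewrite gee0_abs ?ltW ?f_gt0.
apply: subset_measure0 muN0 => // x Dx; apply: fN => /(_ Dx) /eqP.
by rewrite gt_eqF ?f_gt0.
Qed.

Lemma prod_sigma_field_trace d (T : measurableType d) (F1 E1 F2 : set (set T))
    (C : set T) :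
  sub_sigma_field F1 -> sub_sigma_field E1 -> sub_sigma_field F2 ->
  (forall E, E1 E -> exists A, F1 A /\ A `&` C = E `&` C) ->
  forall S : set (prod_sigma_field E1 F2), measurable S ->
  exists S' : set (prod_sigma_field F1 F2),
    measurable S' /\ S `&` C `*` C = S' `&` C `*` C.
Proof.
move=> sF1 sE1 sF2 traceE1 S mS.
have mE := prod_sigma_field_measurableE sE1 sF2.
apply: (dynkin_induction (T := prod_sigma_field E1 F2) (G := rectangles E1 F2)
  (P := fun X => exists S' : set (prod_sigma_field F1 F2),
    measurable S' /\ X `&` C `*` C = S' `&` C `*` C)) => //; last by rewrite -mE.
- exact: rectangles_setI_closed sE1 sF2.
- by exists setT.
- move=> _ [E E1E [B F2B <-]]; have [A [F1A AE]] := traceE1 E E1E.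
  exists (A `*` B); split; first exact: measurable_rectangle.
  by rewrite -!setXI AE.
- move=> S1 _ [S' [mS' S1S']]; exists (~` S'); split; first exact: measurableC.
  have CI (X : set (T * T)) : ~` X `&` C `*` C = ~` (X `&` C `*` C) `&` C `*` C.
    by rewrite setCI setIUl setICl setU0.
  by rewrite CI S1S' -CI.
- move=> F _ _ /choice[G FG]; exists (\bigcup_n G n); split.
    by apply: bigcup_measurable => n _; exact: (FG n).1.
  by rewrite !setI_bigcupl; apply: eq_bigcupr => n _; exact: (FG n).2.
Qed.

Lemma probability_lty d (T : measurableType d) (R : realType)
    (P : probability T R) A :
  measurable A -> P A < +oo.
Proof. by move=> mA; rewrite (le_lt_trans (probability_le1 _ mA)) ?ltry. Qed.

Lemma measurable_diag d (T : measurableType d) :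
  measurable_fun [set: T] (fun w => (w, w)).
Proof. exact: measurable_fun_pair. Qed.

Lemma measurable_diag_preimage d (T : measurableType d) (S : set (T * T)) :
  measurable S -> measurable [set w | S (w, w)].
Proof. by move=> mS; rewrite -[X in measurable X]setTI; exact: measurable_diag. Qed.

Section nonsingular_pair.
Context (R : realType) d (T : measurableType d) (P : probability T R).
Local Notation PP := (Probability.clone _ _ _ (P \x P)%E _).

Definition diag_measure C (mC : measurable C) :=
  mpushforward (mfrestr mC (probability_lty P mC)) (@measurable_diag _ T).

Lemma diag_measureE C (mC : measurable C) S :
  diag_measure mC S = P ([set w | S (w, w)] `&` C).
Proof. by []. Qed.

Lemma diag_measure_setX C (mC : measurable C) A B :
  diag_measure mC (A `*` B) = P (A `&` B `&` C).
Proof. by rewrite diag_measureE; congr (P _); apply/seteqP; split=> w /= [[]]. Qed.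

Lemma diag_measureI_square C (mC : measurable C) S :
  diag_measure mC (S `&` C `*` C) = diag_measure mC S.
Proof.
rewrite !diag_measureE; congr (P _).
by apply/seteqP; split=> w /= [Sw Cw] //; case: Sw.
Qed.

Lemma sub_sigma_field_restr_density G C (mC : measurable C) : sub_sigma_field G ->
  exists p : T -> \bar R, [/\ measurable_fun setT p, forall x, 0 <= p x,
    G (p @^-1` [set 0]), P (p @^-1` [set 0] `&` C) = 0 &
    forall A, G A -> P (A `&` C) = \int[P]_(x in A) p x].
Proof.
move=> sG; have [|p [mp p_ge0 pE]] := sub_sigma_field_radon_nikodym sG
    (mu := P) (nu := mfrestr mC (probability_lty P mC)).
  move=> A GA PA0; have mA := sG.2 _ GA.
  by apply: subset_measure0 PA0; [exact: measurableI|exact: mA|exact: subIsetl].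
have {}pE A : G A -> P (A `&` C) = \int[P]_(x in A) p x := pE A.
have GZ : G (p @^-1` [set 0]).
  rewrite -(sub_sigma_field_measurableE sG) -[X in measurable X]setTI.
  exact: mp (emeasurable_set1 0).
exists p; split => //.
- exact: measurableT_comp mp (measurable_id_sub_sigma_field sG).
- rewrite pE // (eq_integral (fun=> 0)) ?integral0 // => x.
  by rewrite inE => /= ->.
Qed.

Lemma diag_measureI_conull C (mC : measurable C) (S : set (T * T)) A1 A2 :
  measurable S -> measurable A1 -> measurable A2 ->
  P (~` A1 `&` C) = 0 -> P (~` A2 `&` C) = 0 ->
  diag_measure mC (S `&` A1 `*` A2) = diag_measure mC S.
Proof.
move=> mS mA1 mA2 PA1 PA2; rewrite !diag_measureE.
set D := [set w | S (w, w)] `&` C.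
have mD : measurable D by apply: measurableI => //; exact: measurable_diag_preimage.
have DE : D = [set w | (S `&` A1 `*` A2) (w, w)] `&` C `|` D `\` (A1 `&` A2).
  apply/seteqP; split=> [w Dw|w [[[Sw A12w] Cw]|[]//]].
    by have [A12w|nA12w] := pselect ((A1 `&` A2) w); [left; case: Dw|right].
  by split.
rewrite [in RHS]DE measureU0 //.
- apply: measurableI => //; apply: measurable_diag_preimage.
  by apply: measurableI => //; exact: measurableX.
- by apply: measurableD => //; exact: measurableI.
apply: subset_measure0 (null_set_setU _ _ PA1 PA2).
- by apply: measurableD => //; exact: measurableI.
- by apply: measurableU; apply: measurableI => //; exact: measurableC.
- by move=> w [[_ Cw]] /not_andP [nA1|nA2]; [left|right].
- by apply: measurableI => //; exact: measurableC.
- by apply: measurableI => //; exact: measurableC.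
Qed.

Variables (F1 F2 : set (set T)).
Hypotheses (sF1 : sub_sigma_field F1) (sF2 : sub_sigma_field F2).
Local Notation TT := (prod_sigma_field F1 F2).

Lemma nonsingular_pair_diag_measureE C (mC : measurable C) (f : T * T -> R) :
  measurable_fun setT f -> (forall z, (0 <= f z)%R) ->
  (forall A B, F1 A -> F2 B ->
    P (A `&` B `&` C) = \int[P \x P]_(z in A `*` B) (f z)%:E) ->
  forall S : set TT, measurable S ->
    diag_measure mC S = \int[P \x P]_(z in S) (f z)%:E.
Proof.
move=> mf f_ge0 fE; apply: (prod_sigma_field_density_unique sF1 sF2 (mu := PP)).
- exact: measurableT_comp.
- by move=> z; rewrite lee_fin.
- by move=> A B FA FB; rewrite -fE //; exact: diag_measure_setX.
Qed.

Lemma nonsingular_pairP C (mC : measurable C) :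
  nonsingular_pair P F1 F2 C <->
  (forall S : set TT, measurable S -> (P \x P)%E S = 0 -> diag_measure mC S = 0).
Proof.
split=> [[f [mf [f_ge0 fE]]] S mS PS0|null].
  rewrite (nonsingular_pair_diag_measureE mC mf f_ge0 fE mS).
  apply: null_set_integral => //; first exact: prod_sigma_field_measurable mS.
  by apply: measurable_funTS; exact: measurableT_comp.
have mid := measurable_id_prod_sigma_field sF1 sF2.
have [|h [mh h_ge0 h_fin hE]] :=
  radon_nikodym_mpushforward (mf := mid) (mu := PP) (nu := diag_measure mC).
  by apply/null_content_dominatesP.
exists (fine \o h); split; [|split].
- exact: measurableT_comp (measurableT_comp mh mid).
- by move=> z; exact: fine_ge0.
- move=> A B FA FB; rewrite -diag_measure_setX.
  apply: eq_trans (hE _ (measurable_rectangle sF1 sF2 FA FB)) _.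
  by apply: eq_integral => z _; rewrite /= fineK.
Qed.

Lemma nonsingular_pair_subset C1 C2 : measurable C1 -> measurable C2 ->
  C1 `<=` C2 -> nonsingular_pair P F1 F2 C2 -> nonsingular_pair P F1 F2 C1.
Proof.
move=> mC1 mC2 C12 /(nonsingular_pairP mC2) null2.
apply/(nonsingular_pairP mC1) => S mS PS0.
have mD := measurable_diag_preimage (prod_sigma_field_measurable sF1 sF2 mS).
have := null2 S mS PS0; rewrite !diag_measureE.
by apply: subset_measure0; [exact: measurableI..|exact: setIS].
Qed.

Lemma nonsingular_pair_bigcup (Cs : nat -> set T) :
  (forall k, measurable (Cs k)) -> trivIset setT Cs ->
  (forall k, nonsingular_pair P F1 F2 (Cs k)) ->
  nonsingular_pair P F1 F2 (\bigcup_k Cs k).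
Proof.
move=> mCs tCs nsCs.
have mC : measurable (\bigcup_k Cs k) by exact: bigcup_measurable.
apply/(nonsingular_pairP mC) => S mS PS0.
have mD := measurable_diag_preimage (prod_sigma_field_measurable sF1 sF2 mS).
rewrite diag_measureE setI_bigcupr measure_semi_bigcup.
- by rewrite eseries0 // => k _ _; exact: (nonsingular_pairP (mCs k)).1.
- by move=> k; exact: measurableI.
- apply/trivIsetP => i j _ _ ij; move/trivIsetP: tCs => /(_ i j I I ij) Cij0.
  by rewrite setIACA setIid Cij0 setI0.
- by apply: bigcup_measurable => k _; exact: measurableI.
Qed.

Section square.
Variables (C : set T) (mC : measurable C) (p1 p2 : T -> \bar R).
Hypotheses (mp1 : measurable_fun setT p1) (mp2 : measurable_fun setT p2).
Hypotheses (p1_ge0 : forall x, 0 <= p1 x) (p2_ge0 : forall x, 0 <= p2 x).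
Hypotheses (p1E : forall A, F1 A -> P (A `&` C) = \int[P]_(x in A) p1 x)
  (p2E : forall B, F2 B -> P (B `&` C) = \int[P]_(x in B) p2 x).

Let mq : measurable_fun setT (fun z : T * T => p1 z.1 * p2 z.2).
Proof.
exact: emeasurable_funM (measurableT_comp mp1 measurable_fst)
  (measurableT_comp mp2 measurable_snd).
Qed.

Lemma square_density (S : set TT) : measurable S ->
  (P \x P)%E (S `&` C `*` C) = \int[P \x P]_(z in S) (p1 z.1 * p2 z.2).
Proof.
have mCC : measurable (C `*` C) by exact: measurableX.
apply: (prod_sigma_field_density_unique sF1 sF2
  (m := mfrestr mCC (probability_lty PP mCC)) (mu := PP)) => //.
- by move=> z; exact: mule_ge0.
- move=> A B F1A F2B; have mA := sF1.2 _ F1A; have mB := sF2.2 _ F2B.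
  rewrite -[LHS]/((P \x P)%E (A `*` B `&` C `*` C)) -setXI.
  rewrite product_measure1E; [|exact: measurableI..].
  by rewrite integral_setX_mul // -p1E // -p2E.
Qed.

Lemma square_null_support (S : set TT) (A1 A2 : set T) :
  measurable S -> F1 A1 -> F2 A2 -> A1 `<=` [set x | p1 x != 0] ->
  A2 `<=` [set y | p2 y != 0] ->
  (P \x P)%E (S `&` C `*` C) = 0 -> (P \x P)%E (S `&` A1 `*` A2) = 0.
Proof.
move=> mS F1A1 F2A2 A1p1 A2p2 PSC0.
have mW : measurable (S `&` A1 `*` A2 : set TT).
  exact: measurableI mS (measurable_rectangle sF1 sF2 F1A1 F2A2).
have mS' := prod_sigma_field_measurable sF1 sF2 mS.
have mW' := prod_sigma_field_measurable sF1 sF2 mW.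
have mCC : measurable (C `*` C) by exact: measurableX.
apply: (integral0_gt0_measure0 (f := fun z => p1 z.1 * p2 z.2)) => //.
- exact: measurable_funTS.
- move=> z [_ [/A1p1 /= p1z /A2p2 /= p2z]].
  by apply: mule_gt0; rewrite lt0e ?p1z ?p2z ?p1_ge0 ?p2_ge0.
- rewrite -square_density //; apply: subset_measure0 PSC0.
  + exact: measurableI.
  + exact: measurableI.
  + by apply: setSI; exact: subIsetl.
Qed.

End square.

Lemma nonsingular_pair_square_null C (mC : measurable C) :
  nonsingular_pair P F1 F2 C -> forall S : set TT, measurable S ->
  (P \x P)%E (S `&` C `*` C) = 0 -> diag_measure mC S = 0.
Proof.
move=> /(nonsingular_pairP mC) null S mS PSC0.
have [p1 [mp1 p1_ge0 F1Z1 PZ1 p1E]] := sub_sigma_field_restr_density mC sF1.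
have [p2 [mp2 p2_ge0 F2Z2 PZ2 p2E]] := sub_sigma_field_restr_density mC sF2.
have F1A1 := sub_sigma_fieldC sF1 F1Z1; have F2A2 := sub_sigma_fieldC sF2 F2Z2.
have mS' := prod_sigma_field_measurable sF1 sF2 mS.
rewrite -(diag_measureI_conull mC mS' (sF1.2 _ F1A1) (sF2.2 _ F2A2)) ?setCK //.
apply: null; first exact: measurableI mS (measurable_rectangle sF1 sF2 F1A1 F2A2).
apply: (square_null_support mC mp1 mp2 p1_ge0 p2_ge0 p1E p2E) => //.
- by move=> x /= /eqP.
- by move=> y /= /eqP.
Qed.

End nonsingular_pair.

Lemma nonsingular_pair_trace (R : realType) d (T : measurableType d)
    (P : probability T R) (F1 F2 E1 : set (set T)) (C : set T) :
  sub_sigma_field F1 -> sub_sigma_field F2 -> sub_sigma_field E1 ->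
  measurable C -> (forall E, E1 E -> exists A, F1 A /\ A `&` C = E `&` C) ->
  nonsingular_pair P F1 F2 C -> nonsingular_pair P E1 F2 C.
Proof.
move=> sF1 sF2 sE1 mC traceE1 ns; apply/(nonsingular_pairP P sE1 sF2 mC) => S mS PS0.
have [S' [mS' SS']] := prod_sigma_field_trace sF1 sE1 sF2 traceE1 mS.
rewrite -diag_measureI_square SS' diag_measureI_square.
apply: (nonsingular_pair_square_null sF1 sF2 mC ns mS'); rewrite -SS'.
have mS2 := prod_sigma_field_measurable sE1 sF2 mS.
by apply: subset_measure0 PS0 => //; exact: measurableI (measurableX mC mC).
Qed.

Theorem lemma5p6 (R : realType) (d : measure_display) (T : measurableType d)
  (P : probability T R) (F1 F2 : set (set T))
  (hF1 : sub_sigma_field F1) (hF2 : sub_sigma_field F2) :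
  (* (a) *)
  (forall C1 C2 : set T, measurable C1 -> measurable C2 -> C1 `<=` C2 ->
     nonsingular_pair P F1 F2 C2 -> nonsingular_pair P F1 F2 C1) /\
  (* (b) *)
  (forall Cs : nat -> set T,
     (forall k, measurable (Cs k)) -> trivIset setT Cs ->
     (forall k, nonsingular_pair P F1 F2 (Cs k)) ->
     nonsingular_pair P F1 F2 (\bigcup_k Cs k)) /\
  (* (c) *)
  (forall (C : set T) (E1 : set (set T)), measurable C -> sub_sigma_field E1 ->
     (forall E, E1 E -> exists A, F1 A /\ A `&` C = E `&` C) ->
     nonsingular_pair P F1 F2 C -> nonsingular_pair P E1 F2 C).
Proof.
split; [|split].
- exact: nonsingular_pair_subset.
- exact: nonsingular_pair_bigcup.
- by move=> C E1 mC sE1; exact: nonsingular_pair_trace.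
Qed.
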